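(* Let $\mathfrak{g}$ be a finite-dimensional Lie algebra over a field $K$ of characteristic zero, and let $(A,\cdot)$ be a CPA-structure on $\mathfrak{g}$. Then there exists an ideal $I_\infty$ such that (1) $I_\infty^{[k]}\subseteq \mathrm{Ann}_A\subseteq I_\infty$ for all $k$ large enough, and (2) the induced CPA-structure on $\mathfrak{g}/I_\infty$ is nondegenerate.
   Context: A CPA-structure on a Lie algebra $\mathfrak{g}$ is a bilinear product $x\cdot y$ on the underlying space $A$ of $\mathfrak{g}$ satisfying, for all $x,y,z$: $x\cdot y=y\cdot x$; $[x,y]\cdot z=x\cdot(y\cdot z)-y\cdot(x\cdot z)$; $x\cdot[y,z]=[x\cdot y,z]+[y,x\cdot z]$. Let $L(x)(y)=x\cdot y$. The annihilator is $\mathrm{Ann}_A=\ker L=\{x\mid L(x)=0\}$; the structure is nondegenerate if $\mathrm{Ann}_A=0$. An ideal is a subspace $I$ that is both a Lie ideal ($[\mathfrak{g},I]\subseteq I$) and an algebra ideal ($A\cdot I\subseteq I$). For an ideal $I$, $I^{[n]}=[I,[I,[\cdots,[I,I]\cdots]]]$ with $n$ factors $I$. *)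

From HB Require Import structures.
From mathcomp Require Import all_boot all_order all_algebra.
Set Implicit Arguments. Unset Strict Implicit. Unset Printing Implicit Defensive.
Import GRing.Theory.
Local Open Scope ring_scope.

Definition bilinear_op (K : fieldType) (V : vectType K) (f : V -> V -> V) : Prop :=
  (forall (a : K) (x y z : V), f (a *: x + y) z = a *: f x z + f y z) /\
  (forall (a : K) (x y z : V), f x (a *: y + z) = a *: f x y + f x z).

Definition is_lie_bracket (K : fieldType) (V : vectType K) (br : V -> V -> V) : Prop :=
  [/\ bilinear_op br,
      (forall x, br x x = 0) &
      (forall x y z, br x (br y z) + br y (br z x) + br z (br x y) = 0)].

Definition is_CPA (K : fieldType) (V : vectType K) (br p : V -> V -> V) : Prop :=
  [/\ bilinear_op p,
      (forall x y, p x y = p y x),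
      (forall x y z, p (br x y) z = p x (p y z) - p y (p x z)) &
      (forall x y z, p x (br y z) = br (p x y) z + br y (p x z))].

Definition ann (K : fieldType) (V : vectType K) (p : V -> V -> V) (x : V) : Prop :=
  forall y, p x y = 0.

Definition is_ideal (K : fieldType) (V : vectType K) (br p : V -> V -> V)
    (I : {vspace V}) : Prop :=
  (forall x y, y \in I -> br x y \in I) /\ (forall x y, y \in I -> p x y \in I).

(* The subspace [U, W] spanned by all brackets [u, w], u in U, w in W
   (spanned by brackets of basis vectors, using bilinearity). *)
Definition bracket_space (K : fieldType) (V : vectType K) (br : V -> V -> V)
    (U W : {vspace V}) : {vspace V} :=
  <<[seq br u w | u <- vbasis U, w <- vbasis W]>>%VS.

(* lie_pow_aux I n = [I,[I,...,[I,I]...]] with n.+1 factors. *)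
Fixpoint lie_pow_aux (K : fieldType) (V : vectType K) (br : V -> V -> V)
    (I : {vspace V}) (n : nat) : {vspace V} :=
  match n with
  | 0 => I
  | n'.+1 => bracket_space br I (lie_pow_aux br I n')
  end.

(* I^{[n]} with n factors (meaningful for n >= 1). *)
Definition lie_pow (K : fieldType) (V : vectType K) (br : V -> V -> V)
    (I : {vspace V}) (n : nat) : {vspace V} := lie_pow_aux br I n.-1.

From HB Require Import structures.
From mathcomp Require Import all_boot all_order all_algebra.
Import GRing.Theory.
Set Implicit Arguments. Unset Strict Implicit.
Local Open Scope ring_scope.

(* Let J_0 = 0 and J_(n+1) = {x | x.A ⊆ J_n} (the upper annihilator series).
   The J_n form an increasing chain of ideals, the commutator identity of a
   CPA-structure being what makes each of them a Lie ideal; by finite dimension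
   the chain stops at some I = J_N = J_(N+1), which contains Ann_A = J_1, and
   J_(N+1) = J_N says exactly that A/I is nondegenerate.  Filtering A by
   J_0 ⊆ ... ⊆ J_N ⊆ A, every x in I lowers the level by one, and the identity
   [x,y].z = x.(y.z) - y.(x.z) shows that an element of I^[k] lowers it by k;
   once k > N such an element maps A to J_0 = 0. *)

Section Subspaces.
Variables (K : fieldType) (V : vectType K).

Lemma span_ind (P : V -> Prop) (X : seq V) x :
  P 0 -> (forall a u v, P u -> P v -> P (a *: u + v)) ->
  (forall u, u \in X -> P u) -> x \in <<X>>%VS -> P x.
Proof.
move=> P0 PD PX /(coord_span (X := in_tuple X)) ->.
apply: (big_ind P) => // [u v Pu Pv | i _].
  by rewrite -[u]scale1r; apply: PD.
by rewrite -[_ *: _]addr0; apply: PD => //; apply/PX/mem_nth.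
Qed.

Lemma vspace_chain_stable (J : nat -> {vspace V}) :
  (forall n, J n <= J n.+1)%VS -> exists N, J N.+1 = J N.
Proof.
move=> J_sub.
have grow n : (exists N, J N.+1 = J N) \/ (n <= \dim (J n))%N.
  elim: n => [|n [stable | le_n_dim]]; [by right | by left |].
  have [/eqP eqJ | neqJ] := boolP (J n.+1 == J n); first by left; exists n.
  right; apply: leq_ltn_trans le_n_dim _.
  by rewrite (ltn_leqif (dimv_leqif_eq (J_sub n))) eq_sym.
case: (grow (\dim {:V}).+1) => // le_dim; exfalso.
by have := leq_trans le_dim (dimvS (subvf (J _))); rewrite ltnn.
Qed.

End Subspaces.

Section BilinearOp.
Variables (K : fieldType) (V : vectType K) (p : V -> V -> V).
Hypothesis p_bilinear : bilinear_op p.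

Definition rmul (y : V) : {linear V -> V} :=
  HB.pack (fun x => p x y)
    (GRing.isLinear.Build K V V *:%R _ (fun a u v => p_bilinear.1 a u v y)).

Definition lmul (x : V) : {linear V -> V} :=
  HB.pack (p x)
    (GRing.isLinear.Build K V V *:%R _ (fun a u v => p_bilinear.2 a x u v)).

Lemma mul0p x : p 0 x = 0.
Proof. exact: (linear0 (rmul x)). Qed.

Lemma mulp0 x : p x 0 = 0.
Proof. exact: (linear0 (lmul x)). Qed.

Definition colonv (W : {vspace V}) : {vspace V} :=
  (\bigcap_(i < \dim {:V}) (linfun (rmul (vbasis fullv)`_i) @^-1: W))%VS.

Lemma memv_colon W x : x \in colonv W <-> forall y, p x y \in W.
Proof.
split=> [xW y | xW]; last first.
  rewrite memvE; apply/subv_bigcapP => i _.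
  by rewrite -memvE -memv_preim lfunE; apply: xW.
have -> : p x y = lmul x y by [].
rewrite (coord_vbasis (memvf y)) linear_sum rpred_sum // => i _.
rewrite linearZ rpredZ //= -[p x _]/(rmul _ x) -(lfunE (rmul _)) memv_preim.
by move: xW; rewrite !memvE => /subv_trans; apply; apply: bigcapv_inf.
Qed.

End BilinearOp.

Section Lowering.
Variables (K : fieldType) (V : vectType K) (br p : V -> V -> V).
Variable F : nat -> {vspace V}.
Hypothesis p_bilinear : bilinear_op p.
Hypothesis mul_br : forall x y z, p (br x y) z = p x (p y z) - p y (p x z).

Definition lowers (d : nat) (x : V) : Prop :=
  forall j y, y \in F (j + d) -> p x y \in F j.

Lemma lowers_br a b d : lowers 1 a -> lowers d b -> lowers d.+1 (br a b).
Proof.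
move=> a_low b_low j y yF; rewrite mul_br rpredB //.
  by apply/a_low/b_low; rewrite -addnA add1n.
by apply/b_low/a_low; rewrite -addnA addn1.
Qed.

Lemma lowers_span d (X : seq V) x :
  (forall u, u \in X -> lowers d u) -> x \in <<X>>%VS -> lowers d x.
Proof.
apply: span_ind => [j y _ | a u v u_low v_low j y yF]; first by rewrite mul0p ?mem0v.
by rewrite p_bilinear.1 rpredD ?rpredZ ?u_low ?v_low.
Qed.

Lemma lowers_lie_pow (I : {vspace V}) m x :
  (forall u, u \in I -> lowers 1 u) -> x \in lie_pow_aux br I m -> lowers m.+1 x.
Proof.
move=> I_low; elim: m x => [|m IH] x; first exact: I_low.
apply: lowers_span => _ /allpairsP[[u w] [/= uI wI ->]].
by apply: lowers_br; [apply/I_low/vbasis_mem | apply/IH/vbasis_mem].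
Qed.

End Lowering.

Section UpperAnnihilator.
Variables (K : fieldType) (V : vectType K) (br p : V -> V -> V).
Hypotheses (br_bilinear : bilinear_op br) (p_bilinear : bilinear_op p).
Hypothesis mulC : forall x y, p x y = p y x.
Hypothesis mul_br : forall x y z, p (br x y) z = p x (p y z) - p y (p x z).

Definition upper_ann (n : nat) : {vspace V} := iter n (colonv p_bilinear) 0%VS.

Lemma memv_upper_annS n x :
  x \in upper_ann n.+1 <-> forall y, p x y \in upper_ann n.
Proof. exact: memv_colon. Qed.

Lemma upper_ann_mul n x y : y \in upper_ann n -> p x y \in upper_ann n.
Proof.
elim: n x y => [|n IH] x y; first by rewrite memv0 => /eqP ->; rewrite mulp0 ?mem0v.
move=> /memv_upper_annS yJ; apply/memv_upper_annS => z.
by rewrite mulC (mulC x); apply/IH/yJ.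
Qed.

Lemma upper_ann_br n x y : y \in upper_ann n -> br x y \in upper_ann n.
Proof.
case: n => [|n]; first by rewrite memv0 => /eqP ->; rewrite mulp0 ?mem0v.
move=> /memv_upper_annS yJ; apply/memv_upper_annS => z.
by rewrite mul_br rpredB ?yJ //; apply/upper_ann_mul/yJ.
Qed.

Lemma upper_ann_ideal n : is_ideal br p (upper_ann n).
Proof. by split=> x y; [apply: upper_ann_br | apply: upper_ann_mul]. Qed.

Lemma upper_ann_subS n : (upper_ann n <= upper_ann n.+1)%VS.
Proof.
apply/subvP => x xJ; apply/memv_upper_annS => y.
by rewrite mulC upper_ann_mul.
Qed.

Lemma upper_ann_mono : {homo upper_ann : m n / (m <= n)%N >-> (m <= n)%VS}.
Proof.
apply: (homo_leq (r := fun U W => (U <= W)%VS)) upper_ann_subS => //.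
exact: subv_trans.
Qed.

Definition ann_filtration (N j : nat) : {vspace V} :=
  if (j <= N)%N then upper_ann j else fullv.

Lemma ann_filtration_top N j : (N < j)%N -> ann_filtration N j = fullv.
Proof. by rewrite /ann_filtration ltnNge => /negbTE ->. Qed.

Lemma ann_upper_ann1 x : ann p x -> x \in upper_ann 1.
Proof. by move=> x_ann; apply/memv_upper_annS => y; rewrite x_ann rpred0. Qed.

Lemma upper_ann_lowers N :
  upper_ann N.+1 = upper_ann N ->
  forall x, x \in upper_ann N -> lowers p (ann_filtration N) 1 x.
Proof.
move=> stableN x xJ j y; rewrite addn1 /ann_filtration.
case: (leqP j.+1 N) => [lt_jN | le_Nj].
  by rewrite (ltnW lt_jN) => /memv_upper_annS yJ; rewrite mulC yJ.
move=> _; have /memv_upper_annS/(_ y) : x \in upper_ann N.+1 by rewrite stableN.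
case: leqP => [le_jN | _ _]; last exact: memvf.
by have -> : j = N by apply/eqP; rewrite eqn_leq le_jN -ltnS.
Qed.

End UpperAnnihilator.

Theorem proposition2p6 (K : fieldType) (V : vectType K) (br p : V -> V -> V) :
  [pchar K] =i pred0 ->
  is_lie_bracket br ->
  is_CPA br p ->
  exists I : {vspace V},
    [/\ is_ideal br p I,
        (exists N : nat, forall k : nat, (N <= k)%N ->
            (forall x, x \in lie_pow br I k -> ann p x)),
        (forall x, ann p x -> x \in I) &
        (forall x, (forall y, p x y \in I) -> x \in I)].
Proof.
move=> _ [br_bilinear _ _] [p_bilinear mulC mul_br _].
have [N stableN] := vspace_chain_stable (upper_ann_subS p_bilinear mulC).
exists (upper_ann p_bilinear N); split.
- exact: upper_ann_ideal.
- exists N.+1 => k lt_Nk x xI y.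
  have k_gt0 : (0 < k)%N by apply: leq_ltn_trans lt_Nk.
  have x_low := lowers_lie_pow p_bilinear mul_br
    (upper_ann_lowers mulC stableN) xI.
  have := x_low 0%N y; rewrite prednK // add0n ann_filtration_top // memvf.
  by rewrite /ann_filtration /= memv0 => /(_ isT)/eqP.
- have /subvP sub1N : (upper_ann p_bilinear 1 <= upper_ann p_bilinear N)%VS.
    by rewrite -stableN upper_ann_mono.
  by move=> x /(ann_upper_ann1 p_bilinear)/sub1N.
- by move=> x /memv_upper_annS; rewrite stableN.
Qed.
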